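(* Suppose there is a sequence of positive numbers $(c_N)_{N\ge1}$ with $\lim_{N\to\infty}c_N^{1/N}=1$ such that for every $N\in\mathbb N$ and all origin-symmetric convex sets $K,T\subseteq\mathbb R^N$, \[ \gamma_N(K+T)\,\gamma_N(K\cap T)\ge c_N\,\gamma_N(K)\,\gamma_N(T). \] Then for every $d\ge1$ and all origin-symmetric convex sets $K,T\subseteq\mathbb R^d$, \[ \gamma_d(K+T)\,\gamma_d(K\cap T)\ge \gamma_d(K)\,\gamma_d(T). \]
   Context: $\gamma_m$ denotes the standard Gaussian probability measure on $\mathbb R^m$, with density proportional to $e^{-\|x\|^2/2}$. $K+T=\{x+y:x\in K,\ y\in T\}$ is the Minkowski sum. A set $K$ is origin-symmetric if $K=-K$. *)

From HB Require Import structures.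
From mathcomp Require Import all_boot all_order all_algebra.
From mathcomp Require Import all_classical all_reals all_analysis.
Set Implicit Arguments. Unset Strict Implicit. Unset Printing Implicit Defensive.
Import Order.TTheory GRing.Theory Num.Theory.
Import numFieldNormedType.Exports.
Local Open Scope classical_set_scope.
Local Open Scope ring_scope.

(* By Fubini–Tonelli this is the product measure gamma_1^{\otimes N}, i.e. the
   measure with density (2 pi)^{-N/2} e^{-|x|^2/2}, on every (Lebesgue)
   measurable set, in particular on convex sets. *)
Fixpoint gauss {R : realType} (N : nat) : set 'rV[R]_N -> \bar R :=
  match N with
  | 0 => fun A => (\1_A (0 : 'rV[R]_0))%:E
  | N'.+1 => fun A =>
      (\int[normal_prob (0:R) 1]_x
          @gauss R N' [set v : 'rV[R]_N' | A (row_mx (\row_(_ < 1) (x : R)) v)])%E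
  end.

Definition convex_rV {R : realType} (N : nat) (K : set 'rV[R]_N) : Prop :=
  forall x y (t : R), K x -> K y -> 0 <= t -> t <= 1 ->
    K (t *: x + (1 - t) *: y).

Definition symmetric_rV {R : realType} (N : nat) (K : set 'rV[R]_N) : Prop :=
  K = [set x | K (- x)].

Definition minkowski_sum {R : realType} (N : nat) (K T : set 'rV[R]_N)
  : set 'rV[R]_N := [set z | exists x y, K x /\ T y /\ z = x + y].

(* Gaussian measures, Minkowski sums, intersections, convexity and symmetry
   are all compatible with cartesian products.  Applying the hypothesis in
   dimension d m to the m-th cartesian powers K^m and T^m of K, T in R^d
   therefore gives
     c_(d m) (gamma_d(K) gamma_d(T))^m <= (gamma_d(K+T) gamma_d(K cap T))^m.
   Taking m-th roots, c_(d m)^(1/m) = (c_(d m)^(1/(d m)))^d tends to 1 as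
   m -> oo, which yields the inequality with constant 1. *)

From HB Require Import structures.
From mathcomp Require Import all_boot all_order all_algebra.
From mathcomp Require Import all_classical all_reals all_analysis.
From mathcomp Require Import zify.
Import Order.TTheory GRing.Theory Num.Theory.
Import numFieldNormedType.Exports.
Local Open Scope classical_set_scope.
Local Open Scope ring_scope.

(* The library versions of these two lemmas require measurable integrands;
   the sections [set v | A (row_mx _ v)] in the definition of gauss need not
   be measurable. *)
Section nonneg_integral.
Local Open Scope ereal_scope.
Context {d} {T : measurableType d} {R : realType} {mu : {measure set T -> \bar R}}.
Import HBNNSimple.

Lemma nonneg_le_integral (f g : T -> \bar R) :
  (forall x, 0 <= f x) -> (forall x, f x <= g x) ->
  \int[mu]_x f x <= \int[mu]_x g x.
Proof.
move=> f0 fg; have g0 x : 0 <= g x by exact: le_trans (f0 x) (fg x).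
rewrite !ge0_integralTE//; apply: ereal_sup_le => _ [h hf <-].
by exists h => //= x; exact: le_trans (hf x) (fg x).
Qed.

Let nonneg_integralZl_le (k : R) (f : T -> \bar R) : (0 < k)%R ->
  (forall x, 0 <= f x) -> \int[mu]_x (k%:E * f x) <= k%:E * \int[mu]_x f x.
Proof.
move=> k0 f0; have kf0 x : 0 <= k%:E * f x by rewrite mule_ge0// lee_fin ltW.
rewrite !ge0_integralTE//; apply: ge_ereal_sup => _ [h hf <-].
have ki0 : (0 <= k^-1)%R by rewrite invr_ge0 ltW.
pose h' := scale_nnsfun h ki0.
have -> : sintegral mu h = k%:E * sintegral mu h'.
  by rewrite sintegralrM muleA -EFinM divff ?gt_eqF// mul1e.
rewrite lee_pmul2l ?lte_fin//; apply: ereal_sup_ubound; exists h' => //= x.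
rewrite EFinM -(@lee_pmul2l _ k%:E) ?lte_fin// muleA -EFinM divff ?gt_eqF//.
by rewrite mul1r; exact: hf.
Qed.

Lemma nonneg_integralZl (k : R) (f : T -> \bar R) : (0 <= k)%R ->
  (forall x, 0 <= f x) -> \int[mu]_x (k%:E * f x) = k%:E * \int[mu]_x f x.
Proof.
move=> k0 f0; have [->|kN0] := eqVneq k 0%R.
  by rewrite mul0e; under eq_integral do rewrite mul0e; exact: integral0.
have kgt0 : (0 < k)%R by rewrite lt_neqAle eq_sym kN0.
apply/le_anti; rewrite nonneg_integralZl_le//=.
rewrite -(@lee_pmul2l _ k^-1%:E) ?lte_fin ?invr_gt0//.
rewrite muleA -EFinM mulVf ?gt_eqF// mul1e.
have kf0 x : 0 <= k%:E * f x by rewrite mule_ge0// lee_fin.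
have := @nonneg_integralZl_le k^-1 _ _ kf0; rewrite invr_gt0 => /(_ kgt0).
by under eq_integral do rewrite muleA -EFinM mulVf ?gt_eqF// mul1e.
Qed.

End nonneg_integral.

Section gauss_basics.
Context {R : realType}.
Local Open Scope ereal_scope.

Lemma gauss_ge0 {N} (A : set 'rV[R]_N) : 0 <= gauss A.
Proof.
elim: N A => [|N IH] A /=; first by rewrite lee_fin indicE.
exact: integral_ge0.
Qed.

Lemma gauss_le1 {N} (A : set 'rV[R]_N) : gauss A <= 1.
Proof.
elim: N A => [|N IH] A /=; first by rewrite lee_fin indicE; case: (_ \in _).
apply: le_trans (@nonneg_le_integral _ _ _ _ _ (fun=> 1) _ _) _.
- by move=> x; exact: gauss_ge0.
- by move=> x; exact: IH.
- by rewrite integral_cst//= mul1e probability_setT.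
Qed.

Lemma gauss_fin_num {N} (A : set 'rV[R]_N) : gauss A \is a fin_num.
Proof. by rewrite ge0_fin_numE ?gauss_ge0// (le_lt_trans (gauss_le1 A)) ?ltry. Qed.

Lemma gauss0 N : gauss (set0 : set 'rV[R]_N) = 0.
Proof.
elim: N => [|N IH] /=; first by rewrite indicE in_set0.
by under eq_integral do rewrite -[X in gauss X]/(@set0 'rV[R]_N) IH; exact: integral0.
Qed.

End gauss_basics.

Section cartesian_product.
Context {R : realType}.

Definition prod_rV {a b} (A : set 'rV[R]_a) (B : set 'rV[R]_b) : set 'rV[R]_(a + b) :=
  [set w | A (lsubmx w) /\ B (rsubmx w)].

Lemma lsubmx_cons a b (r : 'rV[R]_1) (v : 'rV[R]_(a + b)) :
  @lsubmx R 1 a.+1 b (row_mx r v) = row_mx r (lsubmx v).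
Proof.
apply/rowP => j; rewrite !mxE.
case: splitP => k hk; case: splitP => k' hk' /=.
- by congr (r _ _); apply/val_inj; rewrite /= -hk -hk'.
- by move: (ltn_ord k) hk hk' => /= kl hj hj'; move: kl; rewrite -hj hj'.
- by move: (ltn_ord k') hk hk' => /= kl hj hj'; move: kl; rewrite -hj' hj.
- by rewrite mxE; congr (v _ _); apply/val_inj; move: hk hk' => /= -> [].
Qed.

Lemma rsubmx_cons a b (r : 'rV[R]_1) (v : 'rV[R]_(a + b)) :
  @rsubmx R 1 a.+1 b (row_mx r v) = rsubmx v.
Proof.
apply/rowP => j; rewrite !mxE; case: splitP => k hk /=.
- by move: (ltn_ord k) hk => /=; lia.
- by congr (v _ _); apply/val_inj; move: hk => /=; lia.
Qed.

Lemma gauss_prod a b (A : set 'rV[R]_a) (B : set 'rV[R]_b) :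
  (gauss (prod_rV A B) = gauss A * gauss B)%E.
Proof.
elim: a A => [|a IH] A.
  rewrite /= indicE; have [A0|A0] := pselect (A 0).
    have -> : prod_rV A B = B.
      apply/funext => w; apply/propext.
      by rewrite /prod_rV /= thinmx0 -{2}[w]hsubmxK row_thin_mx; split => [[]|].
    by rewrite mem_set// mul1e.
  have -> : prod_rV A B = set0.
    by apply/funext => w; apply/propext; rewrite /prod_rV /= thinmx0; split => [[]|].
  by rewrite memNset// mul0e gauss0.
have sectionE x : [set v : 'rV[R]_(a + b) | prod_rV A B (row_mx (\row_(_ < 1) x) v)] =
    prod_rV [set u | A (row_mx (\row_(_ < 1) x) u)] B.
  by apply/funext => v; rewrite /prod_rV /= lsubmx_cons rsubmx_cons.
rewrite /=; under eq_integral do rewrite sectionE IH.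
rewrite -(fineK (gauss_fin_num B)); under eq_integral do rewrite muleC.
rewrite nonneg_integralZl 1?muleC ?fine_ge0 ?gauss_ge0//.
by move=> x; exact: gauss_ge0.
Qed.

Lemma minkowski_sum_prod a b (A C : set 'rV[R]_a) (B D : set 'rV[R]_b) :
  minkowski_sum (prod_rV A B) (prod_rV C D) =
  prod_rV (minkowski_sum A C) (minkowski_sum B D).
Proof.
apply/funext => z; apply/propext; split.
  move=> [x [y [[Ax Bx] [[Cy Dy] ->]]]]; rewrite /prod_rV /= !raddfD.
  by split; [exists (lsubmx x), (lsubmx y) | exists (rsubmx x), (rsubmx y)].
move=> [[x1 [y1 [Ax1 [Cy1 e1]]]] [x2 [y2 [Bx2 [Dy2 e2]]]]].
exists (row_mx x1 x2), (row_mx y1 y2).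
by rewrite /prod_rV /= !row_mxKl !row_mxKr add_row_mx -e1 -e2 hsubmxK.
Qed.

Lemma setI_prod a b (A C : set 'rV[R]_a) (B D : set 'rV[R]_b) :
  prod_rV A B `&` prod_rV C D = prod_rV (A `&` C) (B `&` D).
Proof. by apply/funext => z; apply/propext; rewrite /prod_rV /=; tauto. Qed.

Lemma convex_prod a b (A : set 'rV[R]_a) (B : set 'rV[R]_b) :
  convex_rV A -> convex_rV B -> convex_rV (prod_rV A B).
Proof.
move=> cA cB x y t [Ax Bx] [Ay By] t0 t1.
by rewrite /prod_rV /= !linearP !linearZ; split; [apply: cA | apply: cB].
Qed.

Lemma symmetric_prod a b (A : set 'rV[R]_a) (B : set 'rV[R]_b) :
  symmetric_rV A -> symmetric_rV B -> symmetric_rV (prod_rV A B).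
Proof.
move=> sA sB; apply/funext => x.
by rewrite /prod_rV /= !raddfN {1}sA {1}sB.
Qed.

End cartesian_product.

Section cartesian_power.
Context {R : realType}.

(* [d * m.+1] is not convertible to [d + d * m], so the cartesian powers are
   indexed by this recursive copy of [d * m]. *)
Fixpoint powdim (d m : nat) : nat := if m is m'.+1 then (d + powdim d m')%N else 0%N.

Lemma powdimE d m : powdim d m = (d * m)%N.
Proof. by elim: m => [|m IH] /=; rewrite ?muln0 // IH mulnS. Qed.

Fixpoint pow_rV {d} (K : set 'rV[R]_d) m : set 'rV[R]_(powdim d m) :=
  match m return set 'rV[R]_(powdim d m) with
  | 0 => setT
  | m'.+1 => prod_rV K (pow_rV K m')
  end.

Lemma gauss_pow d (K : set 'rV[R]_d) m :
  gauss (pow_rV K m) = ((fine (gauss K)) ^+ m)%:E.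
Proof.
elim: m => [|m IH]; first by rewrite /= indicE in_setT expr0.
by rewrite gauss_prod IH -{1}[gauss K](fineK (gauss_fin_num K)) -EFinM exprS.
Qed.

Lemma minkowski_sum_pow d (K T : set 'rV[R]_d) m :
  minkowski_sum (pow_rV K m) (pow_rV T m) = pow_rV (minkowski_sum K T) m.
Proof.
elim: m => [|m IH] /=; last by rewrite minkowski_sum_prod IH.
by apply/funext => z; apply/propext; split => // _; exists z, 0; rewrite addr0.
Qed.

Lemma setI_pow d (K T : set 'rV[R]_d) m :
  pow_rV K m `&` pow_rV T m = pow_rV (K `&` T) m.
Proof. by elim: m => [|m IH] /=; rewrite ?setIT // setI_prod IH. Qed.

Lemma convex_pow {d} {K : set 'rV[R]_d} m : convex_rV K -> convex_rV (pow_rV K m).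
Proof. by move=> cK; elim: m => [|m IH] //=; exact: convex_prod. Qed.

Lemma symmetric_pow {d} {K : set 'rV[R]_d} m :
  symmetric_rV K -> symmetric_rV (pow_rV K m).
Proof.
move=> sK; elim: m => [|m IH] /=; last exact: symmetric_prod.
by apply/funext => x; apply/propext.
Qed.

End cartesian_power.

Lemma ler_of_subexponential_powers (R : realType) (c : nat -> R) (d : nat) (a b : R) :
  (0 < d)%N -> (forall N, (0 < N)%N -> 0 < c N) ->
  ((fun N : nat => c N `^ (N%:R)^-1) @ \oo --> (1 : R)) ->
  0 <= a -> 0 <= b ->
  (forall m, (0 < m)%N -> c (d * m)%N * b ^+ m <= a ^+ m) -> b <= a.
Proof.
move=> d0 c0 c_cvg a0 b0 hpow; rewrite leNgt; apply/negP => ab.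
have b_gt0 : 0 < b by exact: le_lt_trans a0 ab.
pose r := a / b; pose e : R := (d%:R)^-1.
have r1 : r < 1 by rewrite ltr_pdivrMr// mul1r.
have e0 : 0 < e by rewrite invr_gt0 ltr0n.
have re1 : r `^ e < 1.
  have := gt0_ltr_powR e0 (x := r) (y := 1); rewrite powR1.
  by apply; rewrite // nnegrE ?divr_ge0.
have [N0 _ HN] := cvgr_gt _ c_cvg _ re1.
pose m := N0.+1.
have dm0 : (0 < d * m)%N by rewrite muln_gt0 d0.
have /HN : (N0 <= d * m)%N by rewrite (leq_trans (leqnSn N0))// leq_pmull.
rewrite /= ltNge => /negP; apply.
(* c_(d m) <= r^m gives c_(d m)^(1/(d m)) <= r^(1/d) < 1, for all large m. *)
have e_split : e = m%:R * ((d * m)%N%:R)^-1.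
  by rewrite /e natrM invfM mulrCA mulfV ?mulr1// pnatr_eq0 -lt0n.
have c_le : c (d * m)%N <= r ^+ m.
  by rewrite /r expr_div_n ler_pdivlMr ?exprn_gt0//; exact: hpow.
rewrite e_split powRrM powR_mulrn ?divr_ge0// ge0_ler_powR//.
- by rewrite nnegrE ltW// c0.
- by rewrite nnegrE exprn_ge0// divr_ge0.
Qed.

Theorem theorem1p6 (R : realType) (c : nat -> R) :
  (forall N : nat, (0 < N)%N -> 0 < c N) ->
  ((fun N : nat => c N `^ (N%:R)^-1) @ \oo --> (1 : R)) ->
  (forall (N : nat) (K T : set 'rV[R]_N), (0 < N)%N ->
     convex_rV K -> symmetric_rV K -> convex_rV T -> symmetric_rV T ->
     (gauss (minkowski_sum K T) * gauss (K `&` T)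
        >= (c N)%:E * gauss K * gauss T)%E) ->
  forall (d : nat) (K T : set 'rV[R]_d), (0 < d)%N ->
     convex_rV K -> symmetric_rV K -> convex_rV T -> symmetric_rV T ->
     (gauss (minkowski_sum K T) * gauss (K `&` T)
        >= gauss K * gauss T)%E.
Proof.
move=> c0 c_cvg hyp d K T d0 cK sK cT sT.
rewrite -[gauss (minkowski_sum K T)]fineK ?gauss_fin_num//.
rewrite -[gauss (K `&` T)]fineK ?gauss_fin_num// -[gauss K]fineK ?gauss_fin_num//.
rewrite -[gauss T]fineK ?gauss_fin_num// -!EFinM lee_fin.
apply: (@ler_of_subexponential_powers R c d _ _ d0 c0 c_cvg).
- by rewrite mulr_ge0// fine_ge0// gauss_ge0.
- by rewrite mulr_ge0// fine_ge0// gauss_ge0.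
move=> m m0.
have dm0 : (0 < powdim d m)%N by rewrite powdimE muln_gt0 d0.
have := hyp _ _ _ dm0 (convex_pow m cK) (symmetric_pow m sK)
  (convex_pow m cT) (symmetric_pow m sT).
rewrite minkowski_sum_pow setI_pow !gauss_pow -!EFinM lee_fin powdimE.
by rewrite !exprMn mulrA.
Qed.
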